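(* Let $X$ be any marked Dynkin diagram (not necessarily extensible) with $d$ nodes, and let $n\ge d$ be such that $\det(X_n)\ne0$. Then in $P(X_n)$, $$\overline{\omega}_i^{(n)}\equiv i\,\overline{\omega}_1^{(n)}\pmod{Q(X_n)}\quad\text{for }1\le i\le n-d+1.$$
   Context: A marked Dynkin diagram $X$ has nodes $1,\dots,d$ with node $d$ distinguished and symmetrizable generalized Cartan matrix $C(X)$. For $n\ge d$, $X_n$ is obtained by attaching a simply-laced chain of new nodes $d+1,\dots,n$ to node $d$ (so $C(X_n)$ has $C(X)$ as upper-left block, $2$ on the remaining diagonal, $-1$ in positions $(i,i+1),(i+1,i)$ for $d\le i<n$, $0$ elsewhere). $\det(X_n)$ is the determinant of $C(X_n)$. For the Kac–Moody algebra $\mathfrak g(X_n)$: simple roots $\alpha_i^{(n)}$, root lattice $Q(X_n)=\bigoplus\mathbb Z\alpha_i^{(n)}$, weight lattice $P(X_n)$, fundamental weights $\omega_i^{(n)}$, and $\overline{\omega}_i^{(n)}=\omega_{n-i+1}^{(n)}$. *)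

From HB Require Import structures.
From mathcomp Require Import all_boot all_order all_algebra.
Set Implicit Arguments. Unset Strict Implicit. Unset Printing Implicit Defensive.
Import Order.TTheory GRing.Theory Num.Theory.
Local Open Scope ring_scope.

Definition is_GCM (d : nat) (A : 'M[int]_d) : Prop :=
  (forall i, A i i = 2) /\
  (forall i j, i != j -> A i j <= 0) /\
  (forall i j, (A i j == 0) = (A j i == 0)).

Definition symmetrizable (d : nat) (A : 'M[int]_d) : Prop :=
  exists D : 'I_d -> rat, (forall i, 0 < D i) /\
    (forall i j, D i * (A i j)%:~R = D j * (A j i)%:~R).

(* A marked Dynkin diagram X with d >= 1 nodes (node d, i.e. index d-1,
   is the distinguished one), given by its Cartan matrix C(X). *)
Definition marked_dynkin (d : nat) (A : 'M[int]_d) : Prop :=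
  (0 < d)%N /\ is_GCM A /\ symmetrizable A.

(* C(X_n): C(X) as upper-left block, 2 on the rest of the diagonal,
   -1 at (i,i+1),(i+1,i) for d <= i < n (1-indexed), 0 elsewhere. *)
Definition ext_mx (d : nat) (A : 'M[int]_d) (n : nat) : 'M[int]_n :=
  \matrix_(i < n, j < n)
    if ((i < d)%N && (j < d)%N) then
      (if insub (nat_of_ord i) is Some i' then
        (if insub (nat_of_ord j) is Some j' then A i' j' else 0) else 0)
    else if nat_of_ord i == j then 2
    else if ((d.-1 <= minn i j)%N && ((nat_of_ord i == j.+1) || (nat_of_ord j == i.+1))) then -1
    else 0.

(* Weights are written in coordinates w.r.t. the fundamental weights
   omega_1, ..., omega_n (valid since det C(X_n) <> 0, so P(X_n) is the
   free Z-module on the fundamental weights).  omega k is the (1-indexed)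
   k-th fundamental weight. *)
Definition omega (n k : nat) : 'rV[int]_n := \row_(j < n) ((j.+1 == k)%:R).

Definition omegabar (n i : nat) : 'rV[int]_n := omega n (n - i + 1).

(* Simple root alpha_j (0-indexed) in omega-coordinates: <alpha_j, alpha_i^v> = a_ij. *)
Definition alpha (n : nat) (C : 'M[int]_n) (j : 'I_n) : 'rV[int]_n :=
  \row_(i < n) C i j.

Definition in_root_lattice (n : nat) (C : 'M[int]_n) (v : 'rV[int]_n) : Prop :=
  exists c : 'I_n -> int, v = \sum_(j < n) c j *: alpha C j.

Definition congr_modQ (n : nat) (C : 'M[int]_n) (u v : 'rV[int]_n) : Prop :=
  in_root_lattice C (u - v).

From HB Require Import structures.
From mathcomp Require Import all_boot all_order all_algebra.
From mathcomp Require Import zify.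
Set Implicit Arguments. Unset Strict Implicit. Unset Printing Implicit Defensive.
Import Order.TTheory GRing.Theory Num.Theory.
Local Open Scope ring_scope.

(* In fundamental-weight coordinates the simple root of a chain node m is
   2 omega_(m+1) - omega_m - omega_(m+2), so along the chain, read from its free
   end, the weights omegabar_k have second differences in Q.  Together with
   omegabar_0 = 0 (an index past the last node) this makes k |-> omegabar_k
   linear modulo Q on the chain. *)

Section LinearModulo.
Variables (V : zmodType) (Q : V -> Prop).
Hypotheses (Q0 : Q 0) (QD : forall u v, Q u -> Q v -> Q (u + v))
  (QN : forall u, Q u -> Q (- u)).

Lemma linear_mod_of_second_diff (b : nat -> V) (N : nat) :
  Q (b 0%N) -> (forall k, (k < N)%N -> Q (b k.+2 - b k.+1 *+ 2 + b k)) ->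
  forall k, (k <= N.+1)%N -> Q (b k - b 1%N *+ k).
Proof.
move=> Qb0 Qdiff.
suff Qpair k : (k <= N)%N -> Q (b k - b 1%N *+ k) /\ Q (b k.+1 - b 1%N *+ k.+1).
  by case=> [|k] ?; [rewrite subr0 | case: (Qpair k)].
elim: k => [|k IHk] ltkN; first by rewrite subr0 mulr1n subrr.
have [Qk Qk1] := IHk (ltnW ltkN); split=> //.
have -> : b k.+2 - b 1%N *+ k.+2
    = (b k.+2 - b k.+1 *+ 2 + b k) + (b k.+1 - b 1%N *+ k.+1) *+ 2 - (b k - b 1%N *+ k).
  rewrite mulrnBl -mulrnA opprB [b k.+2 - _ + _]addrAC subrKA [b k.+2 + _ - _]addrAC.
  rewrite -!addrA [b k + _]addrCA subrr addr0.
  have -> : (k.+1 * 2 = k.+2 + k)%N by lia.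
  by rewrite [b 1%N *+ (_ + _)]mulrnDr [in RHS]opprD subrK.
by apply: QD; [apply: QD; [exact: Qdiff | rewrite mulr2n; exact: QD] | exact: QN].
Qed.

End LinearModulo.

Section RootLattice.
Variables (n : nat) (C : 'M[int]_n).

Lemma root_lattice0 : in_root_lattice C 0.
Proof. by exists (fun=> 0); rewrite big1 // => j _; rewrite scale0r. Qed.

Lemma root_latticeD u v :
  in_root_lattice C u -> in_root_lattice C v -> in_root_lattice C (u + v).
Proof.
move=> [a ->] [c ->]; exists (fun j => a j + c j); rewrite -big_split.
by apply: eq_bigr => j _; rewrite scalerDl.
Qed.

Lemma root_latticeN u : in_root_lattice C u -> in_root_lattice C (- u).
Proof.
move=> [a ->]; exists (fun j => - a j); rewrite -sumrN.
by apply: eq_bigr => j _; rewrite scaleNr.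
Qed.

Lemma root_lattice_alpha j : in_root_lattice C (alpha C j).
Proof.
exists (fun k => (k == j)%:R); rewrite (bigD1 j) //= eqxx scale1r big1 ?addr0 //.
by move=> k /negbTE ->; rewrite scale0r.
Qed.

End RootLattice.

Lemma omega_overflow n k : (n < k)%N -> omega n k = 0.
Proof.
by move=> ltnk; apply/rowP => j; rewrite !mxE; case: eqP => // jk; have := ltn_ord j; lia.
Qed.

Lemma alpha_ext_mx_chain d (X : 'M[int]_d) n (m : 'I_n) : (d <= m)%N ->
  alpha (ext_mx X n) m = omega n m.+1 *+ 2 - omega n m - omega n m.+2.
Proof.
move=> ledm; apply/rowP => r; rewrite !mxE (ltnNge m d) ledm andbF !eqSS.
case: r m ledm => r /= _ [m /= _] ledm.
by case: (r == m) / eqP; case: (r == m.+1) / eqP; case: (m == r.+1) / eqP;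
  case: (r.+1 == m) / eqP; case: (d.-1 <= minn r m)%N / idP => //=; lia.
Qed.

Lemma omegabar_second_diff d (X : 'M[int]_d) n k : (0 < d)%N -> (k < n - d)%N ->
  in_root_lattice (ext_mx X n)
    (omegabar n k.+2 - omegabar n k.+1 *+ 2 + omegabar n k).
Proof.
move=> d_gt0 ltk; have ltmn : (n - k.+1 < n)%N by lia.
pose m := Ordinal ltmn; rewrite /omegabar.
have [-> -> ->] : [/\ (n - k.+2 + 1 = m)%N, (n - k.+1 + 1 = m.+1)%N
                    & (n - k + 1 = m.+2)%N] by rewrite /=; split; lia.
suff -> : omega n m - omega n m.+1 *+ 2 + omega n m.+2 = - alpha (ext_mx X n) m.
  exact/root_latticeN/root_lattice_alpha.
rewrite alpha_ext_mx_chain; last by rewrite /=; lia.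
by rewrite !opprB addrC.
Qed.

Theorem lemma3p8 (d : nat) (X : 'M[int]_d) (hX : marked_dynkin X)
  (n : nat) (hdn : (d <= n)%N) (hdet : \det (ext_mx X n) != 0)
  (i : nat) (hi1 : (1 <= i)%N) (hi2 : (i <= n - d + 1)%N) :
  congr_modQ (ext_mx X n) (omegabar n i) (i%:Z *: omegabar n 1).
Proof.
have [d_gt0 _] := hX.
rewrite /congr_modQ -[i%:Z]natz scaler_nat.
apply: (linear_mod_of_second_diff (@root_lattice0 _ _) (@root_latticeD _ _)
  (@root_latticeN _ _) (b := omegabar n) (N := (n - d)%N)); last by rewrite -addn1.
- by rewrite /omegabar subn0 addn1 omega_overflow //; apply: root_lattice0.
- by move=> k; apply: omegabar_second_diff.
Qed.
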